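(* For every homogeneous $f\in\mathbb Z[x_1,\dots,x_n]$ of degree $n-1$, $$\langle f\rangle_n^q=T_1(T_1+qT_2)\cdots(T_1+qT_2+\cdots+q^{n-2}T_{n-1})f.$$
   Context: $\Delta_n=\prod_{1\le i<j\le n}(x_i-x_j)$ and $\widehat\Delta_n^q=\prod_{1\le i,\ i+1<j\le n}(qx_i-x_j)$. The $q$-divided symmetrization is $\langle f\rangle_n^q=\sum_{\sigma\in S_n}\sigma\!\left(\frac{f\,\widehat\Delta_n^q}{\Delta_n}\right)$, where $\sigma$ permutes the variables. $R_if=f(x_1,\dots,x_{i-1},0,x_i,\dots)$, $T_if=\frac1{x_i}(R_{i+1}f-R_if)$, operators composed right to left. *)

From HB Require Import structures.
From mathcomp Require Import all_boot all_order all_algebra all_fingroup.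
From mathcomp Require Import fraction.
From mathcomp.multinomials Require Import mpoly.
Set Implicit Arguments. Unset Strict Implicit. Unset Printing Implicit Defensive.
Import Order.TTheory GRing.Theory.
Local Open Scope ring_scope.

Notation "x %:F" := (@FracField.tofrac _ x) : ring_scope.

Notation Zq := {poly int}.
Definition q : Zq := 'X.

(* Polynomials in m variables x_1..x_m (0-indexed as 'X_0 .. 'X_(m-1)). *)
Notation P m := {mpoly Zq[m]}.

Definition Delta (N : nat) : P N :=
  \prod_(i < N) \prod_(j < N | (i < j)%N) ('X_i - 'X_j).

Definition Deltahat (N : nat) : P N :=
  \prod_(i < N) \prod_(j < N | (i.+1 < j)%N) (q%:MP * 'X_i - 'X_j).

Definition qdivsym (N : nat) (f : P N) : {fraction P N} :=
  \sum_(s : 'S_N) (msym s (f * Deltahat N))%:F / (msym s (Delta N))%:F.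

(* R_i (0-indexed position i): f(x_1,..,x_m+1) |-> f(x_1,..,x_{i},0,x_{i+1},..,x_m),
   i.e. 0 is inserted as the (i+1)-th argument (paper's R_{i+1}). *)
(* the variable x_{k+1} of P m, or 0 if k >= m (never used out of range) *)
Definition Xn (m k : nat) : P m :=
  if insub k is Some i then 'X_(i : 'I_m) else 0.

Definition Rins (m : nat) (i : nat) (f : P m.+1) : P m :=
  f \mPo [tuple (if (j < i)%N then Xn m j
                 else if j == i :> nat then 0 else Xn m j.-1) | j < m.+1].

(* Exact division by the variable x_i: the quotient of p by 'X_i
   (monomials not divisible by 'X_i are dropped; in the use below the
   division is always exact). *)
Definition divX (m : nat) (i : 'I_m) (p : P m) : P m :=
  \sum_(mm <- msupp p | (0 < mm i)%N) p@_mm *: 'X_[(mm - U_(i))%MM].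

(* T (0-indexed i, i.e. the paper's T_{i+1}):
   T_{i+1} f = (R_{i+2} f - R_{i+1} f) / x_{i+1}. *)
Definition Top (m : nat) (i : 'I_m) (f : P m.+1) : P m :=
  divX i (Rins i.+1 f - Rins i f).

Definition Sop (m : nat) (f : P m.+1) : P m :=
  \sum_(i < m) (q ^+ i) *: Top i f.

(* T_1 (T_1 + q T_2) ... (T_1 + ... + q^{k-1} T_k) applied to f in k+1 variables
   (operators composed right to left: the rightmost factor acts first). *)
Fixpoint Ops (k : nat) : P k.+1 -> P 1 :=
  match k with
  | 0 => fun f => f
  | k'.+1 => fun f => @Ops k' (@Sop k'.+1 f)
  end.

Definition embed1 (N : nat) (p : P 1) : P N.+1 :=
  p \mPo [tuple 'X_(ord0 : 'I_N.+1) | _ < 1].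

From HB Require Import structures.
From mathcomp Require Import all_boot all_order all_algebra all_fingroup.
From mathcomp Require Import fraction zify ring.
From mathcomp.multinomials Require Import mpoly.
Set Implicit Arguments. Unset Strict Implicit. Unset Printing Implicit Defensive.
Import GRing.Theory.
Local Open Scope ring_scope.

(* Write [antisym g = sum_s sgn(s) s(g)], so that the divided symmetrization of
   [f] is [antisym (f Deltahat_n) / Delta_n].  As [f Deltahat_n] is homogeneous
   of degree [0 + 1 + ... + (n-1)], its antisymmetrization is a staircase
   alternant, hence [c Delta_n] for a constant [c]; it remains to see that the
   operator product sends [f] to [c].  Setting [x_n = 0] in
   [antisym (f Deltahat_n) = c Delta_n] and grouping permutations by the
   variable sent to [x_n] turns the left side into an alternating sum of the
   [R_k (f Deltahat_n)]; factoring [R_k Deltahat_n] and summing by parts gives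
   [x_1 ... x_(n-1) antisym ((T_1 + q T_2 + ... + q^(n-2) T_(n-1)) f Deltahat_(n-1))],
   while the right side becomes [c x_1 ... x_(n-1) Delta_(n-1)].  Cancelling the
   monomial and inducting on [n] ends at [n = 1], where both sides are [c]. *)

Section MPolyComplements.
Variable R : comNzRingType.

Lemma comp_mpoly_lrmorph n k l (f : {lrmorphism {mpoly R[k]} -> {mpoly R[l]}})
    (p : {mpoly R[n]}) (T : n.-tuple {mpoly R[k]}) :
  f (p \mPo T) = p \mPo [tuple f (tnth T i) | i < n].
Proof.
rewrite !comp_mpolyE linear_sum; apply: eq_bigr => m _.
rewrite linearZ rmorph_prod; congr (_ *: _); apply: eq_bigr => i _.
by rewrite rmorphXn tnth_mktuple.
Qed.

Lemma msymXU n (s : 'S_n) (i : 'I_n) : msym s ('X_i : {mpoly R[n]}) = 'X_(s i).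
Proof.
rewrite msymX; congr 'X_[_]; apply/mnmP => j; rewrite !mnmE.
by rewrite -[in RHS](permKV s j) (inj_eq perm_inj).
Qed.

Lemma mpolyX_neq0 n (i : 'I_n) : ('X_i : {mpoly R[n]}) != 0.
Proof.
apply/eqP => /(congr1 (mcoeff U_(i))).
by rewrite mcoeffXU eqxx mcoeff0 => /eqP; rewrite oner_eq0.
Qed.

Lemma mpolyXB_neq0 n (i j : 'I_n) : i != j -> ('X_i - 'X_j : {mpoly R[n]}) != 0.
Proof.
move=> ij; apply/eqP => /(congr1 (mcoeff U_(i))).
rewrite mcoeffB !mcoeffXU eqxx eq_sym (negbTE ij) subr0 mcoeff0.
by move/eqP; rewrite oner_eq0.
Qed.

Lemma mpolyX_homog n (i : 'I_n) : ('X_i : {mpoly R[n]}) \is 1.-homog.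
Proof. by rewrite dhomogX /= mdeg1. Qed.

End MPolyComplements.

Lemma map_mpoly_homog (R S : comNzRingType) (f : {rmorphism R -> S}) n d
    (p : {mpoly R[n]}) :
  p \is d.-homog -> map_mpoly f p \is d.-homog.
Proof.
move=> p_homog; apply/dhomogP => m; rewrite mcoeff_msupp mcoeff_map_mpoly => fpm.
apply: (dhomog_mf p_homog); rewrite mcoeff_msupp.
by apply: contra fpm => /eqP ->; apply/eqP; exact: rmorph0.
Qed.

Lemma sum_ord_le_uniq n (s : seq nat) :
  size s = n -> uniq s -> (\sum_(i < n) i <= \sum_(x <- s) x)%N.
Proof.
elim: n s => [|n IH] s s_n s_uniq; first by rewrite big_ord0.
have [x x_s n_le_x] : exists2 x, x \in s & (n <= x)%N.
  apply/hasP; apply: contraT => /hasPn s_lt.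
  have /uniq_leq_size : {subset s <= iota 0 n}.
    by move=> x /s_lt; rewrite mem_iota /= add0n ltnNge.
  by rewrite size_iota s_n ltnn => /(_ s_uniq).
rewrite (perm_big _ (perm_to_rem x_s)) big_cons big_ord_recr /= addnC.
by rewrite leq_add // IH ?rem_uniq // size_rem // s_n.
Qed.

Lemma uniq_sum_ge_mem (s : seq nat) y : uniq s -> y \in s ->
  (y + \sum_(i < (size s).-1) i <= \sum_(x <- s) x)%N.
Proof.
move=> s_uniq y_s; rewrite (perm_big _ (perm_to_rem y_s)) big_cons leq_add2l.
by rewrite sum_ord_le_uniq ?rem_uniq // size_rem.
Qed.

(* A multi-index with distinct entries and the degree [0 + 1 + ... + (N-1)] of
   the staircase is a permutation of the staircase. *)
Lemma mdeg_staircase_lt N (m : 'X_{1..N}) : injective m ->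
  mdeg m = (\sum_(i < N) i)%N -> forall i, (m i < N)%N.
Proof.
move=> m_inj m_deg i; set s := [seq m j | j <- enum 'I_N].
have := @uniq_sum_ge_mem s (m i).
rewrite map_inj_uniq ?enum_uniq // map_f ?mem_enum // size_map size_enum_ord.
rewrite big_map big_enum -mdegE m_deg => /(_ erefl erefl).
case: N m i {m_inj m_deg s} => [|N] m i; first by case: i.
by rewrite big_ord_recr /= addnC leq_add2l ltnS.
Qed.

(** * Antisymmetrization *)

Section Antisymmetrizer.
Variables (R : comNzRingType) (N : nat).
Implicit Types (p g : {mpoly R[N]}).

Definition antisym g : {mpoly R[N]} := \sum_(s : 'S_N) (-1) ^+ s * msym s g.

Lemma antisym_is_linear : linear antisym.
Proof.
move=> c g h; rewrite /antisym scaler_sumr -big_split; apply: eq_bigr => s _ /=.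
by rewrite linearP /= mulrDr scalerAr.
Qed.

HB.instance Definition _ :=
  GRing.isLinear.Build R {mpoly R[N]} {mpoly R[N]} _ antisym antisym_is_linear.

Lemma msym_antisym (t : 'S_N) g : msym t (antisym g) = (-1) ^+ t * antisym g.
Proof.
rewrite /antisym rmorph_sum mulr_sumr (reindex_inj (@mulIg _ t^-1)%g) /=.
apply: eq_bigr => s _; rewrite rmorphM rmorphXn rmorphN1 /= -msymMm mulgKV.
by rewrite odd_permM odd_permV signr_addb mulrCA mulrA.
Qed.

Lemma antisymMl p g : (forall s, msym s p = p) -> antisym (p * g) = p * antisym g.
Proof.
move=> p_sym; rewrite /antisym mulr_sumr; apply: eq_bigr => s _.
by rewrite msymM p_sym mulrCA.
Qed.

Lemma antisymX (m : 'X_{1..N}) :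
  antisym 'X_[m] = \det (\matrix_(i, j) 'X_j ^+ m i).
Proof.
apply: eq_bigr => s _; congr (_ * _).
rewrite (mpolyXE_id _ m) rmorph_prod; apply: eq_bigr => i _.
by rewrite rmorphXn /= msymXU mxE.
Qed.

Definition vdm : {mpoly R[N]} := \det (\matrix_(i < N, j < N) 'X_j ^+ i).

Lemma vdmE : vdm = \prod_(i < N) \prod_(j < N | (i < j)%N) ('X_j - 'X_i).
Proof.
have -> : vdm = \det (Vandermonde N (\row_j ('X_j : {mpoly R[N]}))).
  by congr (\det _); apply/matrixP => i j; rewrite !mxE.
by rewrite det_Vandermonde; apply: eq_bigr => i _; apply: eq_bigr => j _; rewrite !mxE.
Qed.

Lemma antisymX_staircase (m : 'X_{1..N}) :
  mdeg m = (\sum_(i < N) i)%N -> exists c : R, antisym 'X_[m] = c *: vdm.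
Proof.
move=> m_deg; rewrite antisymX.
have [/injectiveP m_inj | /injectivePn [i [j ij mij]]] := boolP (injectiveb m).
  have m_lt := mdeg_staircase_lt m_inj m_deg.
  have pi_inj : injective (fun i => Ordinal (m_lt i)).
    by move=> i j /(congr1 val) /m_inj.
  exists ((-1) ^+ perm pi_inj).
  have -> : \matrix_(i, j) ('X_j : {mpoly R[N]}) ^+ m i =
            perm_mx (perm pi_inj) *m \matrix_(i, j) 'X_j ^+ i.
    by rewrite -row_permE; apply/matrixP => i j; rewrite !mxE permE.
  by rewrite det_mulmx det_perm -mul_mpolyC rmorph_sign.
exists 0; rewrite scale0r.
by apply: (determinant_alternate ij) => k; rewrite !mxE mij.
Qed.

Lemma antisym_staircase g : g \is (\sum_(i < N) i)%N.-homog ->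
  exists c : R, antisym g = c *: vdm.
Proof.
move=> g_homog; rewrite (mpolyE g) linear_sum big_seq.
apply: (big_ind (fun h => exists c : R, h = c *: vdm)).
- by exists 0; rewrite scale0r.
- by move=> _ _ [c1 ->] [c2 ->]; exists (c1 + c2); rewrite scalerDl.
move=> m m_supp; rewrite linearZ /=.
have [c ->] := antisymX_staircase (dhomog_mf g_homog m_supp).
by exists (g@_m * c); rewrite scalerA.
Qed.

Lemma vdm_antisym : vdm = antisym 'X_[[multinom (i : nat) | i < N]].
Proof. by rewrite antisymX; congr (\det _); apply/matrixP => i j; rewrite !mxE mnmE. Qed.

Lemma msym_vdm (s : 'S_N) : msym s vdm = (-1) ^+ s * vdm.
Proof. by rewrite vdm_antisym msym_antisym. Qed.

End Antisymmetrizer.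

Arguments vdm {R} N.

Section SignedProducts.
Variables (S : comPzRingType) (I : Type) (r : seq I) (P : pred I).

Lemma prodr_const_cond (x : S) :
  \prod_(i <- r | P i) x = x ^+ (\sum_(i <- r | P i) 1)%N.
Proof. by rewrite -prodrXr; apply: eq_bigr => i _; rewrite expr1. Qed.

Lemma prodrN_cond (F : I -> S) :
  \prod_(i <- r | P i) - F i =
  (-1) ^+ (\sum_(i <- r | P i) 1)%N * \prod_(i <- r | P i) F i.
Proof.
by rewrite -prodr_const_cond -big_split; apply: eq_bigr => i _ /=; rewrite mulN1r.
Qed.

Lemma prodrMl_cond (x : S) (F : I -> S) :
  \prod_(i <- r | P i) (x * F i) =
  x ^+ (\sum_(i <- r | P i) 1)%N * \prod_(i <- r | P i) F i.
Proof. by rewrite -prodr_const_cond -big_split. Qed.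

End SignedProducts.

Lemma sign_pair (S : pzRingType) N k :
  (k < N.+1)%N -> (-1) ^+ (k + N.+1) * (-1) ^+ (N.+1 - k.+1) = -1 :> S.
Proof.
move=> kN; rewrite -exprD (_ : (_ + _ = (N + N).+1)%N); last by lia.
by rewrite -signr_odd /= addnn odd_double.
Qed.

Lemma sum1_ord_gt N k : (\sum_(j < N | (k < j)%N) 1 = N - k.+1)%N.
Proof.
elim: N => [|N IH]; first by rewrite big_ord0.
by rewrite big_mkcond big_ord_recr /= -big_mkcond IH; case: ltnP => /=; lia.
Qed.

Lemma sum1_ord_lt N a : (\sum_(j < N | (j < a)%N) 1 = minn a N)%N.
Proof.
elim: N => [|N IH]; first by rewrite big_ord0 minn0.
by rewrite big_mkcond big_ord_recr /= -big_mkcond IH; case: ltnP => /=; lia.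
Qed.

Lemma sum_gap_pairs N :
  (N.-1 + \sum_(i < N) \sum_(j < N | (i.+1 < j)%N) 1 = \sum_(i < N) i)%N.
Proof.
case: N => [|N]; first by rewrite !big_ord0.
under eq_bigr do rewrite sum1_ord_gt subSS.
rewrite big_ord_recr /= subnS subnn addn0 [in RHS]big_ord_recr /= addnC.
congr (_ + _)%N; rewrite (reindex_inj rev_ord_inj) /=.
by apply: eq_bigr => i _; have := ltn_ord i; lia.
Qed.

Lemma Delta_vdm N :
  Delta N = (-1) ^+ (\sum_(i < N) \sum_(j < N | (i < j)%N) 1)%N * vdm N.
Proof.
rewrite vdmE /Delta -prodrXr -big_split; apply: eq_bigr => i _ /=.
by rewrite -prodrN_cond; apply: eq_bigr => j _; rewrite opprB.
Qed.

Lemma msym_Delta N (s : 'S_N) : msym s (Delta N) = (-1) ^+ s * Delta N.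
Proof. by rewrite Delta_vdm rmorphM rmorph_sign /= msym_vdm mulrCA. Qed.

Lemma Delta_neq0 N : Delta N != 0.
Proof.
apply/prodf_neq0 => i _; apply/prodf_neq0 => j ij.
by apply: mpolyXB_neq0; rewrite neq_ltn ij.
Qed.

Lemma antisym_Delta N (g : P N) : g \is (\sum_(i < N) i)%N.-homog ->
  exists c : Zq, antisym g = c *: Delta N.
Proof.
move=> /antisym_staircase [c ->]; rewrite Delta_vdm.
exists (c * (-1) ^+ (\sum_(i < N) \sum_(j < N | (i < j)%N) 1)%N).
by rewrite -!mul_mpolyC rmorphM rmorph_sign /= -mulrA signrMK.
Qed.

Lemma qdivsymE N (f : P N) :
  qdivsym f = (antisym (f * Deltahat N))%:F / (Delta N)%:F.
Proof.
rewrite /qdivsym /antisym rmorph_sum mulr_suml; apply: eq_bigr => s _.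
rewrite msym_Delta !rmorphM rmorph_sign /=.
by rewrite invfM invr_sign mulrCA mulrA.
Qed.

Lemma Deltahat_homog N :
  Deltahat N \is (\sum_(i < N) \sum_(j < N | (i.+1 < j)%N) 1)%N.-homog.
Proof.
pose homog_of (p : P N) (d : nat) := p \is d.-homog.
apply: (big_ind2 homog_of) => [|p d p' d'|i _]; rewrite /homog_of ?dhomog1 //.
  exact: dhomogM.
apply: (big_ind2 homog_of) => [|p d p' d'|j _]; rewrite /homog_of ?dhomog1 //.
  exact: dhomogM.
by rewrite mul_mpolyC dhomogD ?dhomogZ ?dhomogN ?mpolyX_homog.
Qed.

(** * The operators [R_k] and [T_k] *)

Section InsertZero.
Variable m : nat.
Implicit Types (p : P m) (f : P m.+1).

Lemma XnE (i : 'I_m) : Xn m i = 'X_i.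
Proof. by rewrite /Xn; case: insubP => [j _ /val_inj -> //|]; rewrite ltn_ord. Qed.

Definition ins0 (k j : nat) : P m :=
  if (j < k)%N then Xn m j else if j == k then 0 else Xn m j.-1.

Lemma RinsE k f : Rins k f = f \mPo [tuple ins0 k j | j < m.+1].
Proof. by []. Qed.

Lemma RinsX k (j : 'I_m.+1) : Rins k 'X_j = ins0 k j.
Proof. by rewrite RinsE comp_mpolyXU -tnth_nth tnth_mktuple. Qed.

Lemma RinsM k f g : Rins k (f * g) = Rins k f * Rins k g.
Proof. by rewrite !RinsE rmorphM. Qed.

Lemma RinsC k c : Rins k (c%:MP : P m.+1) = c%:MP.
Proof. by rewrite RinsE comp_mpolyC. Qed.

Lemma ins0_lift (k : 'I_m.+1) (i : 'I_m) : ins0 k (lift k i) = 'X_i.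
Proof.
rewrite /ins0 /= /bump; case: (leqP k i) => ki /=; last by rewrite add0n ki XnE.
by rewrite add1n ifF ?ifF ?XnE //; lia.
Qed.

Lemma ins0_id k : ins0 k k = 0.
Proof. by rewrite /ins0 ltnn eqxx. Qed.

Definition subst0 (i : 'I_m) : m.-tuple (P m) :=
  [tuple if j == i then 0 else 'X_j | j < m].

Lemma mcoeff_subst0 (i : 'I_m) p mm :
  (p \mPo subst0 i)@_mm = if mm i == 0%N then p@_mm else 0.
Proof.
have substX (mm' : 'X_{1..m}) :
    'X_[mm'] \mPo subst0 i = if mm' i == 0%N then 'X_[mm'] else 0.
  rewrite comp_mpolyX (bigD1 i) //= tnth_mktuple eqxx.
  case: eqP => [mm'i | /eqP mm'i]; last by rewrite expr0n (negbTE mm'i) mul0r.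
  rewrite mm'i expr0 mul1r [RHS]mpolyXE_id [RHS](bigD1 i) //= mm'i expr0 mul1r.
  by apply: eq_bigr => j ji; rewrite tnth_mktuple (negbTE ji).
rewrite comp_mpolyEX raddf_sum /= [in RHS](mpolyE p) raddf_sum /=.
case: ifP => mm_i; last first.
  apply: big1 => mm' _; rewrite substX mcoeffZ.
  case: ifP => [/eqP mm'i | _]; last by rewrite mcoeff0 mulr0.
  rewrite mcoeffX; case: eqP => [e | _]; last by rewrite mulr0.
  by rewrite -e mm'i eqxx in mm_i.
apply: eq_bigr => mm' _; rewrite substX !mcoeffZ.
case: ifP => // /negbT mm'i; rewrite mcoeff0 mcoeffX.
case: eqP => [e | _]; last by rewrite mulr0.
by rewrite -e (negbTE mm'i) in mm_i.
Qed.

Lemma mulX_divX (i : 'I_m) p :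
  (forall mm : 'X_{1..m}, mm i = 0%N -> p@_mm = 0) -> 'X_i * divX i p = p.
Proof.
move=> p_div; rewrite /divX mulr_sumr [RHS](mpolyE p).
rewrite [RHS](bigID (fun mm : 'X_{1..m} => 0 < mm i)%N).
rewrite /= [X in _ = _ + X]big1 ?addr0 => [|mm]; last first.
  by rewrite lt0n negbK => /eqP /p_div ->; rewrite scale0r.
apply: eq_bigr => mm mm_i; rewrite -scalerAr -mpolyXD; congr (_ *: 'X_[_]).
apply/mnmP => j; rewrite mnmDE mnmBE mnm1E; case: eqP => [<-|] /=; last by rewrite subn0.
by rewrite add1n subn1 prednK.
Qed.

(* [Rins i f] and [Rins i.+1 f] agree once ['X_i] is set to zero, so their
   difference is divisible by ['X_i]. *)
Lemma Top_exact (i : 'I_m) f : 'X_i * Top i f = Rins i.+1 f - Rins i f.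
Proof.
apply: mulX_divX => mm mm_i.
have := mcoeff_subst0 i (Rins i.+1 f - Rins i f) mm; rewrite mm_i eqxx => <-.
rewrite raddfB /=; suff -> : Rins i.+1 f \mPo subst0 i = Rins i f \mPo subst0 i.
  by rewrite subrr mcoeff0.
rewrite !RinsE !(comp_mpoly_lrmorph (comp_mpoly (subst0 i))).
congr (f \mPo _); apply: eq_from_tnth => j; rewrite !tnth_mktuple /=.
have Xn_subst0 : Xn m i \mPo subst0 i = 0.
  by rewrite XnE comp_mpolyXU -tnth_nth tnth_mktuple eqxx.
rewrite /ins0; case: (ltngtP j i) => ji; first by rewrite ltnS ltnW.
  by rewrite ltnNge ji /=; case: eqP => [-> | //]; rewrite Xn_subst0 comp_mpoly0.
by rewrite ji ltnSn Xn_subst0 comp_mpoly0.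
Qed.

End InsertZero.

Lemma big_lift_perm (R : Type) (idx : R) (op : Monoid.com_law idx) n
    (i j : 'I_n.+1) (F : 'S_n.+1 -> R) :
  \big[op/idx]_(s : 'S_n.+1 | s i == j) F s =
  \big[op/idx]_(s : 'S_n) F (lift_perm i j s).
Proof.
pose restr a (s : 'S_n.+1) k := odflt k (unlift (s a) (s (lift a k))).
have restrK a (s : 'S_n.+1) k : lift (s a) (restr a s k) = s (lift a k).
  rewrite /restr; have := neq_lift a k.
  by rewrite -(can_eq (permK s)) => /unlift_some[] ? ? ->.
have restr_inj (s : 'S_n.+1) : injective (restr i s).
  apply: can_inj (restr (s i) s^-1%g) _ => k.
  by rewrite {1}/restr restrK !permK liftK.
rewrite (reindex (lift_perm i j)) /=; last first.
  exists (fun s => perm (restr_inj s)) => [s _ | s /eqP sij].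
    by apply/permP => k; rewrite permE /restr lift_perm_lift lift_perm_id liftK.
  apply/permP => k; case: (unliftP i k) => [k'|] ->; rewrite ?lift_perm_id //.
  by rewrite lift_perm_lift -sij permE restrK.
by apply: eq_bigl => s; rewrite lift_perm_id eqxx.
Qed.

Lemma Rins_msym_lift_perm N (k : 'I_N.+1) (t : 'S_N) (g : P N.+1) :
  Rins N (msym (lift_perm k ord_max t) g) = msym t (Rins k g).
Proof.
rewrite !RinsE msym_mPo (comp_mpoly_lrmorph (msym t)).
congr (g \mPo _); apply: eq_from_tnth => j; rewrite !tnth_mktuple.
case: (unliftP k j) => [j'|] ->; last by rewrite lift_perm_id ins0_id rmorph0 ins0_id.
rewrite lift_perm_lift ins0_lift [RHS](msymXU _ t) /ins0 /= /bump.
by have tN := ltn_ord (t j'); rewrite (leqNgt N) tN /= tN XnE.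
Qed.

(* Group the permutations according to the position [k] sent to the last place. *)
Lemma Rins_last_antisym N (g : P N.+1) :
  Rins N (antisym g) = antisym (\sum_(k < N.+1) (-1) ^+ (k + N) * Rins k g).
Proof.
rewrite RinsE raddf_sum (partition_big (fun s : 'S_N.+1 => (s^-1)%g ord_max) predT) //=.
rewrite linear_sum; apply: eq_bigr => k _ /=.
rewrite (eq_bigl (fun s : 'S_N.+1 => s k == ord_max)); last first.
  by move=> s /=; apply/eqP/eqP => [<- | <-]; rewrite ?permKV ?permK.
rewrite big_lift_perm antisymMl => [|s]; last by rewrite rmorph_sign.
rewrite mulr_sumr; apply: eq_bigr => t _; rewrite rmorphM rmorph_sign /= -RinsE.
rewrite Rins_msym_lift_perm odd_lift_perm /= mulrA -[(-1) ^+ (k + N)]signr_odd oddD.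
by rewrite -signr_addb.
Qed.

(** * Setting a variable to zero in [Deltahat] *)

Lemma bumpE k i : bump k i = if (k <= i)%N then i.+1 else i.
Proof. by rewrite /bump; case: leqP => _; rewrite ?add1n ?add0n. Qed.

Lemma big_ord_lift_cond (R : Type) (idx : R) (op : Monoid.com_law idx) n
    (k : 'I_n.+1) (P : pred 'I_n.+1) (F : 'I_n.+1 -> R) :
  \big[op/idx]_(j < n.+1 | P j) F j =
  op (if P k then F k else idx) (\big[op/idx]_(j < n | P (lift k j)) F (lift k j)).
Proof. by rewrite big_mkcond (bigD1_ord k) //= [in RHS]big_mkcond. Qed.

Lemma prod_adjacent_pair (S : comPzRingType) M k (F : 'I_M.+1 -> 'I_M.+1 -> S) :
  \prod_(i < M.+1 | i.+1 == k) \prod_(j < M.+1 | j == k :> nat) F i j =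
  if (0 < k < M.+1)%N then F (inord k.-1) (inord k) else 1.
Proof.
case: ifP => [/andP[k_gt0 k_lt] | k_out].
  rewrite (big_pred1 (inord k.-1)) => [|i]; last first.
    by rewrite /= -(inj_eq val_inj) /= inordK; lia.
  by rewrite (big_pred1 (inord k)) // => j; rewrite /= -(inj_eq val_inj) /= inordK.
apply: big1 => i /eqP ik; apply: big1 => j /eqP jk.
by have := ltn_ord i; have := ltn_ord j; move: k_out; rewrite -ik; lia.
Qed.

(* Besides the pairs through the inserted zero and the gap pairs of [y], the
   pair [(k-1, k)] of [y] becomes a gap pair once the zero separates it. *)
Lemma prod_gap_pairs_ins0 (S : comPzRingType) M (a : S) (k : 'I_M.+1)
    (z : 'I_M.+1 -> S) (y : 'I_M -> S) :
  z k = 0 -> (forall i : 'I_M, z (lift k i) = y i) ->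
  \prod_(i < M.+1) \prod_(j < M.+1 | (i.+1 < j)%N) (a * z i - z j) =
  (\prod_(j < M | (k < j)%N) - y j) * (\prod_(i < M | (i.+1 < k)%N) (a * y i)) *
  (\prod_(i < M | i.+1 == k) \prod_(j < M | j == k :> nat) (a * y i - y j)) *
  \prod_(i < M) \prod_(j < M | (i.+1 < j)%N) (a * y i - y j).
Proof.
move=> zk zl.
rewrite (big_ord_lift_cond _ k) (big_ord_lift_cond _ k) /= ltnNge leqnSn mul1r zk mulr0.
have -> : \prod_(j < M | (k.+1 < lift k j)%N) (0 - z (lift k j)) =
          \prod_(j < M | (k < j)%N) - y j.
  by apply: eq_big => j; rewrite ?zl ?sub0r //= bumpE; case: (leqP k j); lia.
rewrite -!mulrA; congr (_ * _).
have row (i : 'I_M) :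
    \prod_(j < M.+1 | ((lift k i).+1 < j)%N) (a * z (lift k i) - z j) =
    (if (i.+1 < k)%N then a * y i else 1) *
    ((\prod_(j < M | (i.+1 < j)%N) (a * y i - y j)) *
     \prod_(j < M | (i.+1 == k) && (j == k :> nat)) (a * y i - y j)).
  rewrite (big_ord_lift_cond _ k) zk subr0 zl (bigID (fun j : 'I_M => i.+1 < j)%N) /=.
  congr (_ * (_ * _)).
  - by rewrite (_ : ((bump k i).+1 < k)%N = (i.+1 < k)%N) // bumpE; case: (leqP k i); lia.
  - apply: eq_big => j; rewrite ?zl // !bumpE; apply: andb_idl => ij.
    by case: (leqP k i) => ki; case: (leqP k j) => kj; lia.
  apply: eq_big => j; rewrite ?zl // !bumpE.
  by case: (leqP k i); case: (leqP k j); case: eqP; case: eqP => /=; lia.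
under eq_bigr do rewrite row.
rewrite big_split [in RHS](big_mkcond (fun i : 'I_M => (i.+1 < k)%N)) /=.
congr (_ * _); rewrite big_split mulrC; congr (_ * _).
rewrite [RHS]big_mkcond; apply: eq_bigr => i _ /=.
by case: (i.+1 == k); last by rewrite big_pred0.
Qed.

Lemma Rins_Deltahat N (k : 'I_N.+1) :
  Rins k (Deltahat N.+1) =
  (\prod_(j < N | (k < j)%N) - 'X_j) * (\prod_(i < N | (i.+1 < k)%N) (q%:MP * 'X_i)) *
  (\prod_(i < N | i.+1 == k) \prod_(j < N | j == k :> nat) (q%:MP * 'X_i - 'X_j)) *
  Deltahat N.
Proof.
rewrite /Deltahat {1}RinsE rmorph_prod /=.
under eq_bigr => i _ do rewrite rmorph_prod /=.
under eq_bigr => i _ do under eq_bigr => j _ do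
  rewrite rmorphB rmorphM /= comp_mpolyC -!RinsE !RinsX.
exact: prod_gap_pairs_ins0 (ins0_id _ _) (ins0_lift k).
Qed.

Definition prodX_lt N a : P N := \prod_(j < N | (j < a)%N) 'X_j.
Definition prodX_gt N b : P N := \prod_(j < N | (b < j)%N) 'X_j.

Definition qomit N (i : nat) : P N := q%:MP ^+ i * \prod_(j < N | (j : nat) != i) 'X_j.

(* The weight of [Rins k f] in the alternating sum; summing by parts against it
   produces the differences [Rins i.+1 f - Rins i f = 'X_i * Top i f]. *)
Definition qomit_diff N (k : nat) : P N :=
  (if (0 < k)%N then qomit N k.-1 else 0) - (if (k < N)%N then qomit N k else 0).

Lemma qomitE N i : qomit N i = q%:MP ^+ i * (prodX_lt N i * prodX_gt N i).
Proof.
rewrite /qomit /prodX_lt /prodX_gt (bigID (fun j : 'I_N => j < i)%N) /=.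
by congr (_ * (_ * _)); apply: eq_bigl => j; case: ltngtP.
Qed.

Lemma prodX_gt_ge N b : (N <= b.+1)%N -> prodX_gt N b = 1.
Proof. by move=> Nb; rewrite /prodX_gt big_pred0 // => j; have := ltn_ord j; lia. Qed.

Lemma prodX_ltS N k :
  (k < N.+1)%N -> prodX_lt N.+1 k.+1 = prodX_lt N.+1 k * 'X_(inord k).
Proof.
move=> kN; rewrite /prodX_lt (bigD1 (inord k)) /= ?inordK ?ltnSn // mulrC.
congr (_ * _); apply: eq_bigl => j; rewrite -(inj_eq val_inj) /= inordK //.
by case: ltngtP; lia.
Qed.

Lemma prodX_gtS N k :
  (k.+1 < N.+1)%N -> prodX_gt N.+1 k = 'X_(inord k.+1) * prodX_gt N.+1 k.+1.
Proof.
move=> kN; rewrite /prodX_gt (bigD1 (inord k.+1)) /= ?inordK ?ltnSn //.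
congr (_ * _); apply: eq_bigl => j; rewrite -(inj_eq val_inj) /= inordK //.
by case: ltngtP; lia.
Qed.

Lemma Rins_Deltahat_qomit M (k : 'I_M.+2) :
  (-1) ^+ (k + M.+1) * Rins k (Deltahat M.+2) = Deltahat M.+1 * qomit_diff M.+1 k.
Proof.
rewrite Rins_Deltahat prod_adjacent_pair prodrN_cond prodrMl_cond sum1_ord_gt.
rewrite -/(prodX_gt _ k) /qomit_diff !qomitE.
case: k => [[|k] /= kM].
  by rewrite !big_pred0 // /prodX_lt big_pred0 // !mulrA sign_pair //; ring.
have -> : (\sum_(i < M.+1 | (i.+1 < k.+1)%N) 1 = k)%N.
  by rewrite (eq_bigl _ _ (fun i => ltnS _ _)) sum1_ord_lt; apply/minn_idPl; lia.
rewrite (eq_bigl _ _ (fun i => ltnS _ _)) -/(prodX_lt _ k).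
have [->|kM'] := eqVneq k M.
  rewrite ltnn /= !prodX_gt_ge // (_ : (M.+1 - M.+2 = 0)%N); last by lia.
  by rewrite expr0 addnn -signr_odd odd_double; ring.
have kltM : (k < M)%N by lia.
rewrite ltnS kltM (prodX_gtS kltM) (prodX_ltS (ltnW kltM)) /=.
by rewrite !mulrA (@sign_pair _ M k.+1) // exprS; ring.
Qed.

(** * The recursion *)

Lemma sum_qomit_diff N (a : nat -> P N) :
  \sum_(k < N.+1) qomit_diff N k * a k = \sum_(i < N) qomit N i * (a i.+1 - a i).
Proof.
rewrite /qomit_diff; under eq_bigr do rewrite mulrBl.
rewrite sumrB big_ord_recl big_ord_recr /= ltnn !mul0r add0r addr0.
under [RHS]eq_bigr do rewrite mulrBr.
by rewrite sumrB; congr (_ - _); apply: eq_bigr => i _; rewrite ltn_ord.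
Qed.

Lemma Rins_alternating_sum M (f : P M.+2) :
  \sum_(k < M.+2) (-1) ^+ (k + M.+1) * Rins k (f * Deltahat M.+2) =
  (\prod_(i < M.+1) 'X_i) * (Sop f * Deltahat M.+1).
Proof.
under eq_bigr => k _ do
  rewrite RinsM mulrCA Rins_Deltahat_qomit [Rins k f * _]mulrC -mulrA.
rewrite -mulr_sumr [RHS]mulrA [RHS]mulrC; congr (_ * _).
rewrite (sum_qomit_diff (fun k => Rins k f)) /Sop mulr_sumr; apply: eq_bigr => i _.
rewrite -mul_mpolyC rmorphXn /= /qomit -Top_exact [in RHS](bigD1 i) //=; ring.
Qed.

Lemma msym_prodX N (s : 'S_N) : msym s (\prod_(i < N) 'X_i : P N) = \prod_(i < N) 'X_i.
Proof.
rewrite rmorph_prod /=; under eq_bigr do rewrite msymXU.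
by rewrite [RHS](reindex_inj (@perm_inj _ s)).
Qed.

Lemma prodX_neq0 N : (\prod_(i < N) 'X_i : P N) != 0.
Proof. by apply/prodf_neq0 => i _; apply: mpolyX_neq0. Qed.

Lemma Rins_Delta_last N : Rins N (Delta N.+1) = Delta N * \prod_(i < N) 'X_i.
Proof.
rewrite /Delta big_ord_recr /= [X in _ * X]big_pred0 => [|j]; last first.
  by rewrite ltnNge -ltnS ltn_ord.
rewrite mulr1 RinsE rmorph_prod -big_split; apply: eq_bigr => i _ /=.
rewrite rmorph_prod big_mkcond big_ord_recr /= -big_mkcond ltn_ord.
congr (_ * _); first apply: eq_bigr => j _.
all: rewrite comp_mpolyB !comp_mpolyXU -!tnth_nth !tnth_mktuple /ins0 /= ?ltn_ord ?XnE //.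
by rewrite ltnn eqxx subr0.
Qed.

(* Apply [Rins M.+1], i.e. set the last variable to zero, and cancel the
   product of the remaining variables. *)
Lemma antisym_Sop M (f : P M.+2) (c : Zq) :
  antisym (f * Deltahat M.+2) = c *: Delta M.+2 ->
  antisym (Sop f * Deltahat M.+1) = c *: Delta M.+1.
Proof.
move=> /(congr1 (Rins M.+1)).
rewrite Rins_last_antisym Rins_alternating_sum antisymMl; last exact: msym_prodX.
rewrite -!mul_mpolyC RinsM RinsC Rins_Delta_last mulrA [RHS]mulrC.
by move/(mulfI (prodX_neq0 M.+1)).
Qed.

Lemma antisym_1 (g : P 1) : antisym g = g.
Proof.
rewrite /antisym (bigD1 1%g) //= big1 ?addr0 => [|s /eqP []].
  by rewrite odd_perm1 mul1r msym1m.
by apply/permP => i; rewrite !ord1.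
Qed.

Lemma Ops_antisym N (g : P N.+1) (c : Zq) :
  antisym (g * Deltahat N.+1) = c *: Delta N.+1 -> Ops g = c%:MP.
Proof.
elim: N g => [|N IH] g; last by move/antisym_Sop; apply: IH.
have Delta1 : Delta 1 = 1 by rewrite /Delta big_ord1; apply: big1 => -[[|k] ?].
have Deltahat1 : Deltahat 1 = 1.
  by rewrite /Deltahat big_ord1; apply: big1 => -[[|[|k]] ?].
by rewrite Deltahat1 Delta1 antisym_1 mulr1 -mul_mpolyC mulr1.
Qed.

Theorem mainTheorem16 (n : nat) (f : {mpoly int[n.+1]}) :
  f \is [in int[n.+1], n.-homog] ->
  qdivsym (map_mpoly (@polyC int) f) =
  (embed1 n (Ops (map_mpoly (@polyC int) f)))%:F.
Proof.
move=> /(map_mpoly_homog (@polyC int)) F_homog.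
set F := map_mpoly _ f in F_homog *.
have FDh_homog : F * Deltahat n.+1 \is (\sum_(i < n.+1) i)%N.-homog.
  by rewrite -sum_gap_pairs; apply: dhomogM F_homog (Deltahat_homog n.+1).
have [c FDh_c] := antisym_Delta FDh_homog.
rewrite qdivsymE FDh_c (Ops_antisym FDh_c) /embed1 comp_mpolyC.
by rewrite -mul_mpolyC rmorphM mulfK // tofrac_eq0 Delta_neq0.
Qed.
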